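(* Let $\mathbb E^{\mathcal A},\mathbb E^{\mathcal B},\mathbb E^{\mathcal C}$ be decomposed symmetric $n$-fold vector bundles over $M,N,P$ and $\eta=(\eta_p)_p\colon\mathbb E^{\mathcal A}\to\mathbb E^{\mathcal B}$, $\tau=(\tau_p)_p\colon\mathbb E^{\mathcal B}\to\mathbb E^{\mathcal C}$ morphisms of symmetric $n$-fold vector bundles over $\eta_0\colon M\to N$, $\tau_0\colon N\to P$. Then $\tau\circ\eta$, a morphism over $\tau_0\circ\eta_0$, has components given, for every nondecreasing tuple $p=(i_1,\ldots,i_k)$ with $\sum p\le n$, $\rho^p_{\rm can}=(K_1,\ldots,K_k)$ and $a_{K_j}\in A_{i_j}$ over a common point, by $$(\tau\circ\eta)_p(a_{K_1},\ldots,a_{K_k})=\sum_{(\rho_1,\ldots,\rho_l)}\mathrm{sgn}(\rho_1,\ldots,\rho_l)\,\tau_{(\#\cup\rho_1,\ldots,\#\cup\rho_l)}\Big(\eta_{|\rho_1|}\big((a_K)_{K\in\rho_1}\big),\ldots,\eta_{|\rho_l|}\big((a_K)_{K\in\rho_l}\big)\Big),$$ the sum running over all $l\ge1$ and tuples of canonically ordered partitions $\rho_1,\ldots,\rho_l$ with $\rho_1\cup\cdots\cup\rho_l=\{K_1,\ldots,K_k\}$ as sets and $\cup\rho_1<\cdots<\cup\rho_l$ in the canonical order of subsets (by cardinality, then lexicographically); $(\rho_1,\ldots,\rho_l)$ denotes the concatenated ordered partition of $\{1,\ldots,\sum p\}$ and $(a_K)_{K\in\rho_j}$ is listed in the order of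 $\rho_j$.
   Context: For vector bundles $A_1,\ldots,A_n\to M$, $\mathbb E^{\mathcal A}(I)=\prod^M_{\emptyset\ne J\subseteq I}A_{\#J}$ with canonical projections and $S_n$-action $(a_J)_{J\subseteq I}\mapsto(\epsilon(\sigma^{-1},J)a_{\sigma^{-1}(J)})_{J\subseteq\sigma(I)}$, $\epsilon(\sigma,I)=(-1)^{\#\{(a,b)\in I^2:a<b,\sigma(a)>\sigma(b)\}}$. A morphism $\tau\colon\mathbb E^{\mathcal A}\to\mathbb E^{\mathcal B}$ of symmetric $n$-fold vector bundles (equivariant morphism of $n$-fold vector bundles) is the same as a family $(\tau_p)_{p}$, $p=(i_1,\ldots,i_k)$ nondecreasing with $\sum p\le n$, of vector bundle morphisms $\tau_p\colon A_{i_1}\otimes\cdots\otimes A_{i_k}\to B_{\sum p}$ over a common base map, symmetric in arguments from $A_j$, $j$ even, skew-symmetric for $j$ odd, via $\tau(J)((a_I)_{I\subseteq J})=(\sum_{\rho=(I_1,\ldots,I_k)\in\mathcal P(I)}\mathrm{sgn}(\rho)\tau_{(\#I_1,\ldots,\#I_k)}(a_{I_1},\ldots,a_{I_k}))_{I\subseteq J}$. Notation: $\mathcal P(I)$ canonically ordered partitions (increasing cardinality, ties lexicographic); $|\rho|=(\#I_1,\ldots,\#I_k)$; $\rho^p_{\rm can}$ the partition of $\{1,\ldots,\sum p\}$ into consecutive blocks of sizes $i_1,\ldots,i_k$; $\mathrm{sgn}$ of an ordered partition of a set = sign of the permutation from natural order to the order listing the blocks successively, each increasingly. *)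

(* Fibrewise model of decomposed symmetric n-fold vector
   bundles and of their morphisms given by components (tau_p)_p. *)
From HB Require Import structures.
From mathcomp Require Import all_boot all_order all_algebra all_fingroup.
From mathcomp Require Import reals.
Set Implicit Arguments. Unset Strict Implicit. Unset Printing Implicit Defensive.
Import GRing.Theory.
Local Open Scope ring_scope.

(* transport along an equality of indices (0 if the indices differ; in all
   uses below the indices are provably equal) *)
Definition vcast (R : pzRingType) (V : nat -> lmodType R) (i j : nat) (x : V i) : V j :=
  match @eqP nat i j with
  | ReflectT e => eq_rect i V x j e
  | ReflectF _ => 0
  end.
Arguments vcast {R} V {i} j x.

Fixpoint lex_lt (s t : seq nat) : bool :=
  match s, t with
  | [::], [::] => false
  | [::], _ :: _ => true
  | _ :: _, [::] => false
  | x :: s', y :: t' => (x < y)%N || ((x == y) && lex_lt s' t')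
  end.

Definition elems n (X : {set 'I_n}) : seq nat := sort leq [seq val x | x <- enum X].

Definition set_lt n (X Y : {set 'I_n}) : bool :=
  (#|X| < #|Y|)%N || ((#|X| == #|Y|) && lex_lt (elems X) (elems Y)).

Definition set_le n (X Y : {set 'I_n}) : bool := (X == Y) || set_lt X Y.

Definition corder n (P : {set {set 'I_n}}) : seq {set 'I_n} := sort (@set_le n) (enum P).

(* sign of an ordered partition: sign of the permutation from the natural
   order to the order listing the blocks successively, each increasingly *)
Definition inv_count (s : seq nat) : nat :=
  (\sum_(i < size s) \sum_(j < size s | (i < j)%N) (nth 0%N s j < nth 0%N s i)%N)%N.

Definition psgn (R : pzRingType) n (rho : seq {set 'I_n}) : R :=
  (-1) ^+ inv_count (flatten [seq elems X | X <- rho]).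

Definition valid_index (n : nat) (p : seq nat) : bool :=
  [&& (0 < size p)%N, all (fun i => 0 < i)%N p, sorted leq p & (sumn p <= n)%N].

(* ---- vector bundles: A i m is the fibre over m : M of A_i (i = 1..n) ---- *)
Definition cfamily (R : pzRingType) (M N : Type) (A : nat -> M -> lmodType R)
  (B : nat -> N -> lmodType R) (f : M -> N) :=
  forall (p : seq nat) (m : M), (forall j : 'I_(size p), A (nth 0%N p j) m) -> B (sumn p) (f m).

Section Morphisms.
Variables (R : pzRingType) (n : nat) (M N : Type).
Variables (A : nat -> M -> lmodType R) (B : nat -> N -> lmodType R) (f : M -> N).

(* tau_p is linear in each argument (i.e. defined on the tensor product) *)
Definition multilinear (tau : cfamily A B f) : Prop :=
  forall p, valid_index n p -> forall (m : M) (a : forall j : 'I_(size p), A (nth 0%N p j) m)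
    (j : 'I_(size p)) (c : R) (x y : A (nth 0%N p j) m),
    tau p m (dfwith a (c *: x + y)) = c *: tau p m (dfwith a x) + tau p m (dfwith a y).

Definition odd_inv (p : seq nat) (s : 'S_(size p)) : nat :=
  #|[set ij : 'I_(size p) * 'I_(size p) |
      [&& (ij.1 < ij.2)%N, (s ij.2 < s ij.1)%N & odd (nth 0%N p ij.1)]]|.

(* symmetric in arguments from A_j, j even, skew-symmetric for j odd *)
Definition graded_symmetric (tau : cfamily A B f) : Prop :=
  forall p, valid_index n p -> forall (m : M) (s : 'S_(size p))
    (Hs : forall j, nth 0%N p (s j) = nth 0%N p j)
    (a : forall j : 'I_(size p), A (nth 0%N p j) m),
    tau p m (fun j => eq_rect _ (fun i => A i m) (a (s j)) _ (Hs j))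
    = (-1) ^+ odd_inv s *: tau p m a.

Definition sym_morphism (tau : cfamily A B f) : Prop :=
  multilinear tau /\ graded_symmetric tau.

(* The map E^A([n]) -> E^B([n]) over m induced by tau: an element of
   E^A([n]) over m is a cfamily (a_I)_I, a_I in A_{#I} (only nonempty I
   matter), and
   tau([n])((a_I)_I) = (sum_{rho in P(I)} sgn(rho) tau_{|rho|}(a_{I_1},..,a_{I_k}))_I. *)
Definition mor_map (tau : cfamily A B f) (m : M) (a : forall I : {set 'I_n}, A #|I| m)
  : forall I : {set 'I_n}, B #|I| (f m) :=
  fun I => \sum_(P : {set {set 'I_n}} | partition P I)
    psgn R (corder P) *:
      vcast (fun i => B i (f m)) #|I|
        (tau [seq #|X| | X : {set 'I_n} <- corder P] m
           (fun j => vcast (fun i => A i m) _ (a (nth set0 (corder P) j)))).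

End Morphisms.

(* K_j : the j-th block of rho^p_can = consecutive blocks of sizes i_1,..,i_k *)
Definition blk n (p : seq nat) (j : nat) : {set 'I_n} :=
  [set i : 'I_n | (sumn (take j p) <= i < sumn (take j.+1 p))%N].

Definition pad (R : pzRingType) n (M : Type) (A : nat -> M -> lmodType R) (p : seq nat) (m : M)
  (x : forall j : 'I_(size p), A (nth 0%N p j) m) : forall I : {set 'I_n}, A #|I| m :=
  fun I => \sum_(j < size p | I == blk n p j) vcast (fun i => A i m) #|I| (x j).

Arguments pad {R} n {M A p m} x.

(* the p-component of a morphism given by its maps F on E([n]) over h:
   F_p(x_1,..,x_k) = entry at {0,..,sum p - 1} of F(pad x) *)
Definition component (R : pzRingType) n (M P : Type) (A : nat -> M -> lmodType R)
  (C : nat -> P -> lmodType R) (h : M -> P)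
  (F : forall m : M, (forall I : {set 'I_n}, A #|I| m) -> forall I : {set 'I_n}, C #|I| (h m))
  (p : seq nat) (m : M) (x : forall j : 'I_(size p), A (nth 0%N p j) m) : C (sumn p) (h m) :=
  vcast (fun i => C i (h m)) (sumn p) (F m (pad n x) [set i : 'I_n | (i < sumn p)%N]).

Definition comp_formula (R : pzRingType) n (M N P : Type) (A : nat -> M -> lmodType R)
  (B : nat -> N -> lmodType R) (C : nat -> P -> lmodType R) (f : M -> N) (g : N -> P)
  (eta : cfamily A B f) (tau : cfamily B C g)
  (p : seq nat) (m : M) (x : forall j : 'I_(size p), A (nth 0%N p j) m) : C (sumn p) (g (f m)) :=
  let a := pad n x in
  (* tuples (rho_1,..,rho_l) of canonically ordered partitions whose blocks
     together are K_1,..,K_k, with U rho_1 < ... < U rho_l: these are the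
     partitions Pi of {K_1,..,K_k} into groups, groups ordered by their
     unions, each group listed in canonical order *)
  \sum_(Pi : {set {set {set 'I_n}}} | partition Pi [set blk n p j | j : 'I_(size p)])
    let groups := sort (fun G H => set_le (cover G) (cover H)) (enum Pi) in
    let rhos := [seq corder G | G <- groups] in
    psgn R (flatten rhos) *:
      vcast (fun i => C i (g (f m))) (sumn p)
        (tau [seq #|cover G| | G : {set {set 'I_n}} <- groups] (f m)
           (fun j => vcast (fun i => B i (f m)) _
              (eta [seq #|X| | X : {set 'I_n} <- nth [::] rhos j] m
                 (fun i => vcast (fun i => A i m) _ (a (nth set0 (nth [::] rhos j) i)))))).

Arguments mor_map {R} n {M N A B f} tau m a I.
Arguments multilinear {R} n {M N A B f} tau.
Arguments graded_symmetric {R} n {M N A B f} tau.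
Arguments sym_morphism {R} n {M N A B f} tau.
Arguments component {R} n {M P A C} h F p m x.
Arguments comp_formula {R} n {M N P A B C f g} eta tau p m x.

(* Fix p = (i_1 <= ... <= i_k), the blocks K_1,..,K_k of rho^p_can (consecutive
   intervals of sizes i_j covering S = {0,..,sum p - 1}) and the element
   pad(x) of E^A([n]) carrying x_j at K_j and 0 elsewhere; the p-component of
   tau o eta is the S-entry of tau([n])(eta([n])(pad x)).
   (1) By multilinearity eta([n])(pad x) vanishes at every X that is not a
       union of blocks; at such a union only the partition of X into blocks
       contributes (mor_map_pad).
   (2) Hence only partitions Q of S into unions of blocks contribute to the
       S-entry of tau([n]); they correspond bijectively (X |-> the blocks in
       X) to the partitions Pi of {K_1,..,K_k}, and the canonical order of Q
       lists the groups of Pi by the order of their unions (corder_unions).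
   (3) Pulling the inner signs out of tau by multilinearity, the signs
       combine as sgn(rho_1,..,rho_l) = sgn(U rho_1,..,U rho_l) * prod sgn(rho_j),
       proved by counting inversions (psgn_groups). *)

From HB Require Import structures.
From mathcomp Require Import all_boot all_order all_algebra all_fingroup.
From mathcomp Require Import reals boolp zify.

Unset Printing Implicit Defensive.
Import GRing.Theory.

Section Transport.
Variables (R : pzRingType) (V : nat -> lmodType R).
Local Open Scope ring_scope.

Lemma vcast_id i (x : V i) : vcast V i x = x.
Proof. by rewrite /vcast; case: eqP => // e; rewrite eq_axiomK. Qed.

Lemma vcastK i j k (x : V i) : i = j -> vcast V k (vcast V j x) = vcast V k x.
Proof. by move=> <-; rewrite vcast_id. Qed.

Lemma vcastZ i j c (x : V i) : vcast V j (c *: x) = c *: vcast V j x.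
Proof. by rewrite /vcast; case: eqP => [e|_]; [case: j / e | rewrite scaler0]. Qed.

Lemma vcast0 i j : vcast V j (0 : V i) = 0.
Proof. by rewrite /vcast; case: eqP => [e|_] //; case: j / e. Qed.

Lemma vcast_sum i j (I : Type) (r : seq I) (P : pred I) (F : I -> V i) :
  vcast V j (\sum_(k <- r | P k) F k) = \sum_(k <- r | P k) vcast V j (F k).
Proof. by rewrite /vcast; case: eqP => [e|_]; [case: j / e | rewrite big1]. Qed.

End Transport.

Section Multilinear.
Context {R : comPzRingType} {n : nat} {M N : Type}.
Context {A : nat -> M -> lmodType R} {B : nat -> N -> lmodType R} {f : M -> N}.
Context {tau : cfamily A B f} (tau_ml : multilinear n tau).
Context {p : seq nat} {m : M} (p_valid : valid_index n p).
Local Open Scope ring_scope.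

Lemma multilinear_zero (a : forall j : 'I_(size p), A (nth 0%N p j) m) j :
  a j = 0 -> tau p m a = 0.
Proof.
move=> aj0; have := tau_ml p p_valid m a j 1 0 0; rewrite !scale1r !addr0.
have -> : dfwith a (0 : A (nth 0%N p j) m) = a.
  by apply: functional_extensionality_dep => k; case: dfwithP => //; rewrite aj0.
by move/(congr1 (fun z => z - tau p m a)); rewrite addrK subrr => <-.
Qed.

Lemma multilinear_scale (c : 'I_(size p) -> R)
    (y : forall j : 'I_(size p), A (nth 0%N p j) m) :
  tau p m (fun j => c j *: y j) = (\prod_(j < size p) c j) *: tau p m y.
Proof.
pose yt t := fun j : 'I_(size p) => if (j < t)%N then c j *: y j else y j.
have yt_step t (ht : (t < size p)%N) :
    tau p m (yt t.+1) = c (Ordinal ht) *: tau p m (yt t).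
  have -> : yt t.+1 = dfwith (yt t) (c (Ordinal ht) *: y (Ordinal ht) + 0).
    apply: functional_extensionality_dep => k; rewrite /yt ltnS leq_eqVlt.
    case: dfwithP => [|{}k ne]; first by rewrite /= eqxx addr0.
    suff -> : (k == t :> nat) = false by [].
    by apply: contraNF ne => /eqP kt; apply/eqP/val_inj.
  have zero : tau p m (dfwith (yt t) (0 : A (nth 0%N p (Ordinal ht)) m)) = 0.
    by apply: (@multilinear_zero _ (Ordinal ht)); rewrite dfwith_in.
  rewrite tau_ml // zero addr0.
  congr (_ *: tau p m _); apply: functional_extensionality_dep => k.
  by case: dfwithP => //; rewrite /yt /= ltnn.
have yt_prod t : (t <= size p)%N ->
    tau p m (yt t) = (\prod_(j < size p | (j < t)%N) c j) *: tau p m y.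
  elim: t => [_|t IH ht].
    have -> : yt 0%N = y by apply: functional_extensionality_dep => k; rewrite /yt.
    by rewrite big_pred0 ?scale1r.
  rewrite yt_step IH ?(ltnW ht) // scalerA [in RHS](bigD1 (Ordinal ht)) ?ltnSn //=.
  congr (_ * _ *: _).
  by apply: eq_bigl => k; rewrite ltnS -val_eqE /= ltn_neqAle andbC.
have := yt_prod _ (leqnn (size p)); rewrite (eq_bigl xpredT) => [<-|k]; last exact: ltn_ord.
by congr (tau p m _); apply: functional_extensionality_dep => k; rewrite /yt ltn_ord.
Qed.

End Multilinear.

Section CanonicalOrder.

Lemma lex_lt_irr (s : seq nat) : lex_lt s s = false.
Proof. by elim: s => //= x s ->; rewrite ltnn eqxx. Qed.

Lemma lex_lt_trans {s t u : seq nat} : lex_lt s t -> lex_lt t u -> lex_lt s u.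
Proof.
elim: s t u => [|x s IH] [|y t] [|z u] //=.
case/orP=> [xy|/andP[/eqP-> st]]; case/orP=> [yz|/andP[/eqP<- tu]].
- by rewrite (ltn_trans xy yz).
- by rewrite xy.
- by rewrite yz.
- by rewrite eqxx (IH _ _ st tu) orbT.
Qed.

Lemma lex_lt_total (s t : seq nat) : s != t -> lex_lt s t || lex_lt t s.
Proof.
elim: s t => [|x s IH] [|y t] //=.
by case: (ltngtP x y) => //= <-; rewrite eqseq_cons eqxx => /IH.
Qed.

Context {n : nat}.

Lemma elems_mem (X : {set 'I_n}) (i : 'I_n) : (val i \in elems X) = (i \in X).
Proof. by rewrite /elems mem_sort (mem_map val_inj) mem_enum. Qed.

Lemma elems_inj : injective (@elems n).
Proof. by move=> X Y eXY; apply/setP => i; rewrite -!elems_mem eXY. Qed.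

Lemma set_lt_irr (X : {set 'I_n}) : set_lt X X = false.
Proof. by rewrite /set_lt ltnn eqxx lex_lt_irr. Qed.

Lemma set_lt_trans {X Y Z : {set 'I_n}} : set_lt X Y -> set_lt Y Z -> set_lt X Z.
Proof.
rewrite /set_lt; case: (ltngtP #|X| #|Y|) => //= hXY; case: (ltngtP #|Y| #|Z|) => //= hYZ.
- by rewrite (ltn_trans hXY hYZ).
- by rewrite -hYZ hXY.
- by rewrite hXY hYZ.
- by rewrite hXY hYZ ltnn eqxx /=; apply: lex_lt_trans.
Qed.

Lemma set_le_trans : transitive (@set_le n).
Proof.
move=> Y X Z; rewrite /set_le; case/orP=> [/eqP->//|hXY]; case/orP=> [/eqP<-|hYZ].
  by rewrite hXY orbT.
by rewrite (set_lt_trans hXY hYZ) orbT.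
Qed.

Lemma set_le_anti : antisymmetric (@set_le n).
Proof.
move=> X Y; rewrite /set_le; case: (eqVneq X Y) => //= _ /andP[h1 h2].
by have := set_lt_trans h1 h2; rewrite set_lt_irr.
Qed.

Lemma set_le_total : total (@set_le n).
Proof.
move=> X Y; rewrite /set_le; case: (eqVneq X Y) => //= nXY.
rewrite /set_lt; case: (ltngtP #|X| #|Y|) => //= _.
by apply: lex_lt_total; apply: contra_neq nXY; apply: elems_inj.
Qed.

Lemma set_le_card (X Y : {set 'I_n}) : set_le X Y -> (#|X| <= #|Y|)%N.
Proof. by rewrite /set_le /set_lt => /orP[/eqP->|/orP[/ltnW|/andP[/eqP->]]]. Qed.

Lemma corder_perm (P : {set {set 'I_n}}) : perm_eq (corder P) (enum P).
Proof. by rewrite /corder perm_sort. Qed.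

Lemma mem_corder (P : {set {set 'I_n}}) X : (X \in corder P) = (X \in P).
Proof. by rewrite (perm_mem (corder_perm P)) mem_enum. Qed.

Lemma big_corder (T : Type) (idx : T) (op : Monoid.com_law idx)
    (P : {set {set 'I_n}}) (F : {set 'I_n} -> T) :
  \big[op/idx]_(X <- corder P) F X = \big[op/idx]_(X in P) F X.
Proof. by rewrite (perm_big _ (corder_perm P)) big_enum. Qed.

Lemma corder_unique (P : {set {set 'I_n}}) (s : seq {set 'I_n}) :
  sorted (@set_le n) s -> uniq s -> s =i P -> corder P = s.
Proof.
move=> ss us ms; apply: (sorted_eq set_le_trans set_le_anti) => //.
  exact: sort_sorted set_le_total _.
apply: uniq_perm => [||X]; rewrite ?mem_corder ?ms //.
by rewrite (perm_uniq (corder_perm P)) enum_uniq.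
Qed.

Lemma sumn_corder {P : {set {set 'I_n}}} {I : {set 'I_n}} :
  partition P I -> sumn [seq #|X| | X : {set 'I_n} <- corder P] = #|I|.
Proof. by move=> pP; rewrite sumnE big_map big_corder -(card_partition pP). Qed.

Lemma valid_corder {P : {set {set 'I_n}}} {I : {set 'I_n}} :
  partition P I -> I != set0 -> valid_index n [seq #|X| | X : {set 'I_n} <- corder P].
Proof.
move=> pP I0; have /and3P[/eqP cP _ s0P] := pP.
apply/and4P; split.
- rewrite size_map (perm_size (corder_perm P)) -cardE card_gt0.
  by apply: contraNneq I0 => P0; rewrite -cP P0 /cover big_set0.
- apply/allP => k /mapP[X]; rewrite mem_corder => XP ->; rewrite card_gt0.
  by apply: contraNneq s0P => <-.
- rewrite sorted_map; apply: sub_sorted (sort_sorted set_le_total _) => X Y.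
  exact: set_le_card.
- by rewrite (sumn_corder pP); apply: leq_trans (max_card _) _; rewrite card_ord.
Qed.

End CanonicalOrder.

Lemma trivIset_eq {T : finType} {P : {set {set T}}} {A B : {set T}} {x : T} :
  trivIset P -> A \in P -> B \in P -> x \in A -> x \in B -> A = B.
Proof.
move=> /trivIsetP tP AP BP xA xB; apply/eqP; apply: contraTT isT => nAB.
by have := tP A B AP BP nAB => /disjointFr/(_ xA); rewrite xB.
Qed.

Lemma card_ord_lt (n b : nat) : (b <= n)%N -> #|[set i : 'I_n | (i < b)%N]| = b.
Proof.
move=> bn; have widen_inj : injective (widen_ord bn) by move=> i j [/val_inj].
rewrite -[RHS]card_ord -(card_imset _ widen_inj); apply: eq_card => i.
rewrite inE; apply/idP/imsetP => [ib|[j _ ->]]; last exact: ltn_ord j.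
by exists (Ordinal ib) => //; apply: val_inj.
Qed.

Lemma card_interval (n a b : nat) : (a <= b <= n)%N ->
  #|[set i : 'I_n | (a <= i < b)%N]| = (b - a)%N.
Proof.
case/andP => ab bn; have an := leq_trans ab bn.
have -> : [set i : 'I_n | (a <= i < b)%N] = [set i : 'I_n | (i < b)%N] :\: [set i : 'I_n | (i < a)%N].
  by apply/setP => i; rewrite !inE -leqNgt andbC.
rewrite cardsD (setIidPr _) ?card_ord_lt //.
by apply/subsetP => i; rewrite !inE => /leq_trans; apply.
Qed.

Lemma sumn_take_mono (p : seq nat) (j k : nat) : (j <= k)%N ->
  (sumn (take j p) <= sumn (take k p))%N.
Proof. by move=> jk; rewrite -(subnKC jk) takeD sumn_cat leq_addr. Qed.

Lemma sumn_take_le (p : seq nat) (j : nat) : (sumn (take j p) <= sumn p)%N.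
Proof. by rewrite -{2}(cat_take_drop j p) sumn_cat leq_addr. Qed.

Lemma sumn_takeS (p : seq nat) (j : nat) : (j < size p)%N ->
  sumn (take j.+1 p) = (sumn (take j p) + nth 0 p j)%N.
Proof. by move=> jp; rewrite (take_nth 0 jp) -cats1 sumn_cat /= addn0. Qed.

Definition seg (n : nat) (p : seq nat) : {set 'I_n} := [set i : 'I_n | (i < sumn p)%N].

Definition blocks (n : nat) (p : seq nat) : {set {set 'I_n}} :=
  [set blk n p j | j : 'I_(size p)].

Section Blocks.
Context {n : nat} {p : seq nat} (p_valid : valid_index n p).
Local Notation seg := (seg n p).
Local Notation blocks := (blocks n p).

Let sum_le : (sumn p <= n)%N.
Proof. by case/and4P: p_valid. Qed.

Lemma card_blk (j : 'I_(size p)) : #|blk n p j| = nth 0 p j.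
Proof.
rewrite /blk card_interval ?sumn_takeS ?addKn //.
by rewrite leq_addr -sumn_takeS // (leq_trans (sumn_take_le _ _) sum_le).
Qed.

Lemma card_seg : #|seg| = sumn p.
Proof. by rewrite card_ord_lt. Qed.

Lemma seg_neq0 : seg != set0.
Proof.
rewrite -card_gt0 card_seg; case/and4P: p_valid => p0 /allP pos _ _.
by case: p p0 pos => //= i q _ pos; rewrite ltn_addr // pos ?mem_head.
Qed.

Lemma blk_neq0 (j : 'I_(size p)) : blk n p j != set0.
Proof.
rewrite -card_gt0 card_blk; case/and4P: p_valid => _ /allP pos _ _.
by apply: pos; rewrite mem_nth.
Qed.

Lemma blk_disj {j k : 'I_(size p)} {i : 'I_n} :
  i \in blk n p j -> i \in blk n p k -> j = k.
Proof.
wlog jk : j k / (j <= k)%N.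
  by move=> H; case: (leqP j k) => [/H//|/ltnW kj ij ik]; rewrite (H k j kj ik ij).
rewrite !inE => /andP[_ ij] /andP[ki _]; apply/val_inj/eqP; rewrite eqn_leq jk /=.
by rewrite leqNgt; apply: contraL (leq_ltn_trans ki ij) => /sumn_take_mono; rewrite -leqNgt.
Qed.

Lemma blk_inj : injective (blk n p : 'I_(size p) -> {set 'I_n}).
Proof. by move=> j k jk; have /set0Pn[i ij] := blk_neq0 j; apply: (blk_disj ij); rewrite -jk. Qed.

Lemma blk_sub_seg (j : 'I_(size p)) : blk n p j \subset seg.
Proof.
apply/subsetP => i; rewrite !inE => /andP[_ /leq_trans]; apply.
exact: sumn_take_le.
Qed.

Lemma blocks_triv : trivIset blocks.
Proof.
apply/trivIsetP => X Y /imsetP[j _ ->] /imsetP[k _ ->] jk.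
apply/pred0P => i /=; apply/negP => /andP[ij ik].
by move: jk; rewrite (blk_disj ij ik) eqxx.
Qed.

Lemma block_neq0 {K : {set 'I_n}} : K \in blocks -> K != set0.
Proof. by case/imsetP=> j _ ->; apply: blk_neq0. Qed.

Lemma cover_blocks : cover blocks = seg.
Proof.
apply/eqP; rewrite eqEcard; apply/andP; split.
  by apply/bigcupsP => X /imsetP[j _ ->]; apply: blk_sub_seg.
rewrite -(eqP blocks_triv) card_seg big_imset /=; last by move=> j k _ _; apply: blk_inj.
by rewrite (eq_bigr _ (fun j _ => card_blk j)) sumnE (big_nth 0) big_mkord.
Qed.

Lemma pad_out {R : pzRingType} {M : Type} {A : nat -> M -> lmodType R} {m : M}
    (x : forall j : 'I_(size p), A (nth 0%N p j) m) (X : {set 'I_n}) :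
  X \notin blocks -> pad n x X = 0%R.
Proof.
move=> Xb; rewrite /pad big_pred0 // => k; apply/negbTE; apply: contraNneq Xb => ->.
exact: imset_f.
Qed.
End Blocks.

Definition blocks_in (n : nat) (p : seq nat) (X : {set 'I_n}) : {set {set 'I_n}} :=
  [set K in blocks n p | K \subset X].

(* Step (2): partitions Pi of the set of blocks correspond to the partitions
   Q of the ground set into unions of blocks ("saturated" partitions), via
   G |-> cover G and X |-> blocks_in X. *)
Definition unions {n : nat} (Pi : {set {set {set 'I_n}}}) : {set {set 'I_n}} :=
  [set cover G | G in Pi].
Definition grouping (n : nat) (p : seq nat) (Q : {set {set 'I_n}}) : {set {set {set 'I_n}}} :=
  [set blocks_in n p X | X in Q].
Definition saturated (n : nat) (p : seq nat) (Q : {set {set 'I_n}}) : bool :=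
  [forall X in Q, cover (blocks_in n p X) == X].

Definition groups {n : nat} (Pi : {set {set {set 'I_n}}}) : seq {set {set 'I_n}} :=
  sort (fun G H : {set {set 'I_n}} => set_le (cover G) (cover H)) (enum Pi).

Section BlockUnions.
Context {n : nat} {p : seq nat} (p_valid : valid_index n p).
Local Notation blocks := (blocks n p).
Local Notation blocks_in := (blocks_in n p).
Local Notation grouping := (grouping n p).
Local Notation saturated := (saturated n p).

Lemma blocks_in_sub (X : {set 'I_n}) : blocks_in X \subset blocks.
Proof. by apply/subsetP => K; rewrite inE => /andP[]. Qed.

Lemma block_in_cover {G : {set {set 'I_n}}} {K : {set 'I_n}} {i : 'I_n} :
  G \subset blocks -> K \in blocks -> i \in K -> i \in cover G -> K \in G.
Proof.
move=> sG Kb iK /bigcupP[K' K'G iK'].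
by rewrite (trivIset_eq blocks_triv Kb (subsetP sG _ K'G) iK iK').
Qed.

Lemma blocks_in_cover (G : {set {set 'I_n}}) : G \subset blocks -> blocks_in (cover G) = G.
Proof.
move=> sG; apply/setP => K; rewrite inE; apply/andP/idP => [[Kb /subsetP KG]|KG].
  have /set0Pn[i iK] := block_neq0 p_valid Kb.
  exact: block_in_cover sG Kb iK (KG i iK).
by rewrite (subsetP sG _ KG) bigcup_sup.
Qed.

Lemma block_partitionE (Q : {set {set 'I_n}}) (X : {set 'I_n}) :
  (partition Q X && (Q \subset blocks)) = (Q == blocks_in X) && (cover (blocks_in X) == X).
Proof.
apply/andP/andP => [[/and3P[/eqP cQ _ _] sQ]|[/eqP-> /eqP cX]].
  by rewrite -cQ blocks_in_cover // !eqxx.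
rewrite blocks_in_sub /partition cX eqxx (trivIsetS (blocks_in_sub X) blocks_triv).
by split=> //=; rewrite inE; apply/andP => -[/(block_neq0 p_valid)]; rewrite eqxx.
Qed.

Section PaddedMorphism.
Context {R : comPzRingType} {M N : Type}.
Context {A : nat -> M -> lmodType R} {B : nat -> N -> lmodType R} {f : M -> N}.
Context {eta : cfamily A B f} (eta_ml : multilinear n eta).
Context {m : M} (x : forall j : 'I_(size p), A (nth 0%N p j) m).
Local Open Scope ring_scope.

Lemma mor_map_pad (X : {set 'I_n}) :
  mor_map n eta m (pad n x) X =
  if cover (blocks_in X) == X then
    psgn R (corder (blocks_in X)) *:
      vcast (fun i => B i (f m)) #|X|
        (eta [seq #|Y| | Y : {set 'I_n} <- corder (blocks_in X)] m
           (fun j => vcast (fun i => A i m) _ (pad n x (nth set0 (corder (blocks_in X)) j))))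
  else 0.
Proof.
rewrite /mor_map (bigID (fun Q : {set {set 'I_n}} => Q \subset blocks)) /=.
rewrite [Z in _ + Z]big1 ?addr0 => [|Q /andP[pQ /subsetPn[K KQ Kb]]]; last first.
  have /and3P[/eqP cQ _ nQ] := pQ.
  have X_neq0 : X != set0.
    have /set0Pn[i iK] : K != set0 by apply: contraNneq nQ => <-.
    by apply/set0Pn; exists i; rewrite -cQ; apply/bigcupP; exists K.
  have jK : (index K (corder Q) < size [seq #|Y| | Y : {set 'I_n} <- corder Q])%N.
    by rewrite size_map index_mem mem_corder.
  rewrite (multilinear_zero eta_ml (valid_corder pQ X_neq0) _ (Ordinal jK)) ?vcast0 ?scaler0 //=.
  by rewrite nth_index ?mem_corder // pad_out // vcast0.
case: ifP => cX.
  by rewrite (big_pred1 (blocks_in X)) // => Q; rewrite /= block_partitionE cX andbT.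
by rewrite big_pred0 // => Q; rewrite block_partitionE cX andbF.
Qed.
End PaddedMorphism.

Section Groupings.
Context {Pi : {set {set {set 'I_n}}}} (Pi_part : partition Pi blocks).

Lemma group_sub {G : {set {set 'I_n}}} : G \in Pi -> G \subset blocks.
Proof. by case/and3P: Pi_part => /eqP <- _ _ GP; apply: bigcup_sup. Qed.

Lemma cover_group_neq0 {G : {set {set 'I_n}}} : G \in Pi -> cover G != set0.
Proof.
move=> GP; case/and3P: Pi_part => _ _ n0; have /set0Pn[K KG] : G != set0.
  by apply: contraNneq n0 => <-.
have /set0Pn[i iK] := block_neq0 p_valid (subsetP (group_sub GP) _ KG).
by apply/set0Pn; exists i; apply/bigcupP; exists K.
Qed.

Lemma cover_group_inj : {in Pi &, injective (@cover _)}.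
Proof.
move=> G H GP HP GH; have /set0Pn[i iG] := cover_group_neq0 GP.
case/bigcupP: (iG) => K KG iK.
have KH : K \in H.
  by apply: (block_in_cover (group_sub HP) (subsetP (group_sub GP) _ KG) iK); rewrite -GH.
by case/and3P: Pi_part => _ tPi _; apply: (trivIset_eq tPi GP HP KG KH).
Qed.

Lemma unions_partition : partition (unions Pi) (seg n p).
Proof.
case/and3P: Pi_part => /eqP cPi tPi n0Pi; apply/and3P; split.
- apply/eqP/setP => i; rewrite -(cover_blocks p_valid) -cPi.
  apply/bigcupP/bigcupP => [[_ /imsetP[G GP ->] /bigcupP[K KG iK]]|[K /bigcupP[G GP KG] iK]].
    by exists K => //; apply/bigcupP; exists G.
  by exists (cover G); [apply: imset_f | apply/bigcupP; exists K].
- apply/trivIsetP => X Y /imsetP[G GP ->] /imsetP[H HP ->] GH.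
  apply/pred0P => i /=; apply/negP => /andP[iG /bigcupP[K KH iK]].
  have KG := block_in_cover (group_sub GP) (subsetP (group_sub HP) _ KH) iK iG.
  by move: GH; rewrite (trivIset_eq tPi GP HP KG KH) eqxx.
- by apply/imsetP => -[G GP G0]; move: (cover_group_neq0 GP); rewrite -G0 eqxx.
Qed.

Lemma unions_saturated : saturated (unions Pi).
Proof. by apply/forall_inP => X /imsetP[G GP ->]; rewrite blocks_in_cover ?group_sub. Qed.

Lemma unionsK : grouping (unions Pi) = Pi.
Proof.
rewrite /grouping /unions -imset_comp -[RHS]imset_id; apply: eq_in_imset => G GP /=.
exact: blocks_in_cover (group_sub GP).
Qed.

Lemma corder_unions : corder (unions Pi) = [seq cover G | G <- groups Pi].
Proof.
apply: corder_unique.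
- by rewrite sorted_map; apply: sort_sorted => G H; apply: set_le_total.
- rewrite map_inj_in_uniq ?sort_uniq ?enum_uniq // => G H.
  by rewrite !mem_sort !mem_enum; apply: cover_group_inj.
- by move=> X; apply/mapP/imsetP => -[G GP ->]; exists G; rewrite // ?mem_sort ?mem_enum in GP *.
Qed.
End Groupings.

Section SaturatedPartitions.
Context {Q : {set {set 'I_n}}} (Q_part : partition Q (seg n p)) (Q_sat : saturated Q).

Lemma groupingK : unions (grouping Q) = Q.
Proof.
rewrite /grouping /unions -imset_comp -[RHS]imset_id; apply: eq_in_imset => X XQ /=.
exact/eqP/(forall_inP Q_sat).
Qed.

Lemma grouping_partition : partition (grouping Q) blocks.
Proof.
case/and3P: Q_part => /eqP cQ tQ n0Q; have QX X : X \in Q -> cover (blocks_in X) = X.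
  by move=> XQ; apply/eqP/(forall_inP Q_sat).
apply/and3P; split.
- apply/eqP/setP => K; apply/bigcupP/idP => [[G /imsetP[X _ ->]]|Kb].
    by rewrite inE => /andP[].
  have /set0Pn[i iK] := block_neq0 p_valid Kb.
  have : i \in cover Q by rewrite cQ -(cover_blocks p_valid); apply/bigcupP; exists K.
  case/bigcupP => X XQ iX; exists (blocks_in X); first exact: imset_f.
  by apply: block_in_cover (blocks_in_sub X) Kb iK _; rewrite QX.
- apply/trivIsetP => G H /imsetP[X XQ ->] /imsetP[Y YQ ->] XY.
  apply/pred0P => K /=; apply/negP; rewrite !inE => /andP[/andP[Kb KX] /andP[_ KY]].
  have /set0Pn[i iK] := block_neq0 p_valid Kb.
  by move: XY; rewrite (trivIset_eq tQ XQ YQ (subsetP KX _ iK) (subsetP KY _ iK)) eqxx.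
- apply/imsetP => -[X XQ X0]; move: (QX X XQ); rewrite -X0 /cover big_set0 => eX.
  by move: n0Q; rewrite eX XQ.
Qed.
End SaturatedPartitions.
End BlockUnions.

(* Step (3): signs.  inv_count is computed by the recursive inversion count
   invc, for which concatenation is additive up to the cross inversions. *)
Fixpoint invc (s : seq nat) : nat :=
  if s is x :: s' then (count (fun y => y < x) s' + invc s')%N else 0%N.

Lemma inv_countE (s : seq nat) : inv_count s = invc s.
Proof.
have count_nth (a : pred nat) t : count a t = (\sum_(j < size t) a (nth 0 t j))%N.
  by elim: t => [|y t IH]; rewrite ?big_ord0 // big_ord_recl /= IH.
elim: s => [|x s IH]; first by rewrite /inv_count big_ord0.
rewrite /inv_count /= big_ord_recl /= -IH /inv_count; congr addn.
  by rewrite big_mkcond big_ord_recl /= add0n count_nth; apply: eq_bigr => j _; rewrite add0n.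
apply: eq_bigr => i _; rewrite big_mkcond big_ord_recl /= [RHS]big_mkcond.
by apply: eq_bigr => j _; rewrite /bump /= !add1n ltnS.
Qed.

Definition cross (s t : seq nat) : nat := (\sum_(x <- s) count (fun y => y < x) t)%N.

Lemma invc_cat (s t : seq nat) : invc (s ++ t) = (invc s + invc t + cross s t)%N.
Proof.
elim: s => [|x s IH] /=; first by rewrite /cross big_nil addn0.
by rewrite IH count_cat /cross big_cons; lia.
Qed.

Lemma cross_perm {s s' t t' : seq nat} :
  perm_eq s s' -> perm_eq t t' -> cross s t = cross s' t'.
Proof.
move=> ss' tt'; rewrite /cross (perm_big _ ss'); apply: eq_bigr => x _.
by move/seq.permP: tt' => ->.
Qed.

Lemma invc_flatten (T : eqType) (s : seq T) (F G : T -> seq nat) :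
  (forall x, x \in s -> perm_eq (F x) (G x)) ->
  (invc (flatten (map F s)) + \sum_(x <- s) invc (G x)
   = invc (flatten (map G s)) + \sum_(x <- s) invc (F x))%N.
Proof.
elim: s => [|x s IH] FG; first by rewrite !big_nil.
rewrite /= !big_cons !invc_cat.
have perm_flat : perm_eq (flatten (map F s)) (flatten (map G s)).
  apply/seq.permP => a; rewrite !count_flatten -!map_comp !sumnE !big_map.
  by apply: eq_big_seq => y ys; apply/seq.permP/FG; rewrite inE ys orbT.
have := IH (fun y ys => FG y (mem_behead (s := x :: s) ys)).
by rewrite (cross_perm (FG x (mem_head x s)) perm_flat); lia.
Qed.

Lemma invc_sorted (s : seq nat) : sorted leq s -> invc s = 0%N.
Proof.
elim: s => [|x s IH] //= xs; rewrite IH ?(path_sorted xs) // addn0.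
apply/eqP; rewrite -leqn0 leqNgt -has_count; apply/hasP => -[y ys] /=.
by rewrite ltnNge (allP (order_path_min leq_trans xs) y ys).
Qed.

Lemma perm_elems_cover {n : nat} {G : {set {set 'I_n}}} : trivIset G ->
  perm_eq (flatten [seq elems X | X <- corder G]) (elems (cover G)).
Proof.
have count_elems (X : {set 'I_n}) (a : pred nat) : count a (elems X) = (\sum_(i in X | a i) 1)%N.
  have ps : perm_eq (elems X) [seq val i | i <- enum X] by rewrite /elems perm_sort.
  by rewrite (seq.permP ps) count_map -sum1_count big_enum_cond.
move=> tG; apply/seq.permP => a; rewrite count_flatten -map_comp count_elems.
rewrite big_trivIset_cond // sumnE big_map big_corder.
by apply: eq_bigr => X _ /=; rewrite count_elems.
Qed.

Lemma psgn_groups (R : comPzRingType) (n : nat) (grp : seq {set {set 'I_n}}) :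
  (forall G, G \in grp -> trivIset G) ->
  psgn R (flatten [seq corder G | G <- grp]) =
  (psgn R [seq cover G | G <- grp] * \prod_(G <- grp) psgn R (corder G))%R.
Proof.
move=> grp_triv; rewrite /psgn prodrXr -exprD; congr (_ ^+ _)%R.
rewrite !inv_countE (eq_bigr _ (fun G _ => inv_countE _)).
have -> : flatten [seq elems X | X <- flatten [seq corder G | G <- grp]]
          = flatten [seq flatten [seq elems X | X <- corder G] | G <- grp].
  by elim: grp {grp_triv} => //= G grp <-; rewrite map_cat flatten_cat.
rewrite -map_comp.
have := @invc_flatten _ grp (fun G => flatten [seq elems X | X <- corder G])
                           (fun G => elems (cover G)) (fun G GP => perm_elems_cover (grp_triv G GP)).
rewrite big1 => [|G _]; last exact/invc_sorted/(sort_sorted leq_total).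
by rewrite addn0 => ->.
Qed.

Section Composition.
Context {R : comPzRingType} {n : nat} {M N P : Type}.
Context {A : nat -> M -> lmodType R} {B : nat -> N -> lmodType R} {C : nat -> P -> lmodType R}.
Context {eta0 : M -> N} {tau0 : N -> P} {eta : cfamily A B eta0} {tau : cfamily B C tau0}.
Context (eta_ml : multilinear n eta) (tau_ml : multilinear n tau).
Context {p : seq nat} (p_valid : valid_index n p) {m : M}.
Variable x : forall j : 'I_(size p), A (nth 0%N p j) m.
Local Open Scope ring_scope.
Local Notation b := (mor_map n eta m (pad n x)).

Definition grouping_term (Pi : {set {set {set 'I_n}}}) : C (sumn p) (tau0 (eta0 m)) :=
  let rhos := [seq corder G | G <- groups Pi] in
  psgn R (flatten rhos) *:
    vcast (fun i => C i (tau0 (eta0 m))) (sumn p)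
      (tau [seq #|cover G| | G : {set {set 'I_n}} <- groups Pi] (eta0 m)
         (fun j => vcast (fun i => B i (eta0 m)) _
            (eta [seq #|X| | X : {set 'I_n} <- nth [::] rhos j] m
               (fun i => vcast (fun i => A i m) _ (pad n x (nth set0 (nth [::] rhos j) i)))))).

Lemma comp_formula_groupings :
  comp_formula n eta tau p m x
  = \sum_(Pi : {set {set {set 'I_n}}} | partition Pi (blocks n p)) grouping_term Pi.
Proof. by []. Qed.

Lemma component_saturated :
  component n (tau0 \o eta0)
    (fun (m' : M) (a : forall I : {set 'I_n}, A #|I| m') =>
       mor_map n tau (eta0 m') (mor_map n eta m' a)) p m x
  = \sum_(Q : {set {set 'I_n}} | partition Q (seg n p) && saturated n p Q)
      psgn R (corder Q) *: vcast (fun i => C i (tau0 (eta0 m))) (sumn p)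
        (tau [seq #|X| | X : {set 'I_n} <- corder Q] (eta0 m)
           (fun j => vcast (fun i => B i (eta0 m)) _ (b (nth set0 (corder Q) j)))).
Proof.
rewrite /component; set inner := mor_map n eta m (pad n x).
rewrite /mor_map -/(seg n p) vcast_sum.
rewrite (bigID (saturated n p)) /= [Z in _ + Z]big1 ?addr0 => [|Q /andP[Q_part]]; last first.
  case/forall_inPn => X XQ cX.
  have jX : (index X (corder Q) < size [seq #|Y| | Y : {set 'I_n} <- corder Q])%N.
    by rewrite size_map index_mem mem_corder.
  rewrite (multilinear_zero tau_ml (valid_corder Q_part (seg_neq0 p_valid)) _ (Ordinal jX)).
    by rewrite vcast0 scaler0 vcast0.
  by rewrite /= nth_index ?mem_corder // /inner (mor_map_pad p_valid eta_ml) (negbTE cX) vcast0.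
apply: eq_bigr => Q /andP[Q_part _].
by rewrite vcastZ vcastK // (sumn_corder Q_part).
Qed.

Lemma unions_term (Pi : {set {set {set 'I_n}}}) : partition Pi (blocks n p) ->
  psgn R (corder (unions Pi)) *: vcast (fun i => C i (tau0 (eta0 m))) (sumn p)
    (tau [seq #|X| | X : {set 'I_n} <- corder (unions Pi)] (eta0 m)
       (fun j => vcast (fun i => B i (eta0 m)) _ (b (nth set0 (corder (unions Pi)) j))))
  = grouping_term Pi.
Proof.
move=> Pi_part; have := valid_corder (unions_partition p_valid Pi_part) (seg_neq0 p_valid).
rewrite /grouping_term (corder_unions p_valid Pi_part); cbv zeta; set grp := groups Pi.
rewrite -![[seq #|X| | X : {set 'I_n} <- [seq cover G | G <- grp]]]map_comp => grp_valid.
have grp_sub G : G \in grp -> G \subset blocks n p.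
  by rewrite mem_sort mem_enum => /(group_sub Pi_part).
have -> : (fun j : 'I_(size [seq #|cover G| | G <- grp]) =>
   vcast (fun i => B i (eta0 m)) (nth 0%N [seq #|cover G| | G <- grp] j)
     (b (nth set0 [seq cover G | G <- grp] j)))
  = (fun j => psgn R (corder (nth set0 grp j)) *:
      vcast (fun i => B i (eta0 m)) (nth 0%N [seq #|cover G| | G <- grp] j)
       (eta [seq #|X| | X : {set 'I_n} <- nth [::] [seq corder G | G <- grp] j] m
          (fun i => vcast (fun i => A i m) _
             (pad n x (nth set0 (nth [::] [seq corder G | G <- grp] j) i))))).
  apply: functional_extensionality_dep => j.
  have jg : (j < size grp)%N by rewrite -(size_map (fun G => #|cover G|)).
  have Gsub := grp_sub _ (mem_nth set0 jg).
  rewrite !(nth_map set0) // (mor_map_pad p_valid eta_ml) blocks_in_cover // eqxx.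
  rewrite vcastZ vcastK // (@sumn_corder _ _ (cover (nth set0 grp j))) //.
  by have := block_partitionE p_valid (nth set0 grp j) (cover (nth set0 grp j));
    rewrite blocks_in_cover // !eqxx Gsub andbT.
rewrite (multilinear_scale tau_ml grp_valid) vcastZ scalerA; congr (_ *: _).
rewrite psgn_groups => [|G /grp_sub sG]; last exact: trivIsetS sG blocks_triv.
congr (_ * _); rewrite (big_nth set0) big_mkord size_map.
by apply: eq_bigr => j _.
Qed.

Theorem composition_formula :
  component n (tau0 \o eta0)
    (fun (m' : M) (a : forall I : {set 'I_n}, A #|I| m') =>
       mor_map n tau (eta0 m') (mor_map n eta m' a)) p m x
  = comp_formula n eta tau p m x.
Proof.
rewrite component_saturated comp_formula_groupings.
rewrite (reindex_onto unions (grouping n p)) => [|Q /andP[Q_part Q_sat]]; last first.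
  exact: groupingK Q_sat.
have Pi_part Pi : partition (unions Pi) (seg n p) && saturated n p (unions Pi)
    && (grouping n p (unions Pi) == Pi) -> partition Pi (blocks n p).
  by case/andP => /andP[Q_part Q_sat] /eqP <-; apply: grouping_partition.
apply: eq_big => [Pi|Pi /Pi_part]; last exact: unions_term.
apply/idP/idP => [/Pi_part //|Pi_part'].
by rewrite unions_partition // unions_saturated // unionsK // eqxx.
Qed.
End Composition.

Theorem mainTheorem8 (R : realType) (n : nat) (M N P : Type)
  (A : nat -> M -> lmodType R) (B : nat -> N -> lmodType R) (C : nat -> P -> lmodType R)
  (eta0 : M -> N) (tau0 : N -> P)
  (eta : cfamily A B eta0) (tau : cfamily B C tau0) :
  sym_morphism n eta -> sym_morphism n tau ->
  forall (p : seq nat), valid_index n p ->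
  forall (m : M) (x : forall j : 'I_(size p), A (nth 0 p j) m),
    component n (tau0 \o eta0)
      (fun (m' : M) (a : forall I : {set 'I_n}, A #|I| m') =>
         mor_map n tau (eta0 m') (mor_map n eta m' a)) p m x
    = comp_formula n eta tau p m x.
Proof.
move=> [eta_ml _] [tau_ml _] p p_valid m x.
exact: (@composition_formula R _ _ _ _ _ _ _ _ _ _ _ eta_ml tau_ml _ p_valid _ x).
Qed.
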